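(* Let $D\ge2$ and let $\Lambda\subseteq\mathbb Z^D$ be the lattice with generator matrix $G=(v_{jr})_{1\le j,r\le D}$, where row $j$ is $(v_{j1},\dots,v_{jD})$. Assume $\Lambda$ induces a lattice tiling of the shape $\mathcal S$. Let $\ell_1\ge1$ and $\ell_2\ge0$ be integers with $\ell_1+\ell_2\le D$. Let $\delta=(d_1,\dots,d_D)$ with <ul> <li>$d_r=+1$ for $1\le r\le\ell_1$,</li> <li>$d_r=-1$ for $\ell_1<r\le\ell_1+\ell_2$,</li> <li>$d_r=0$ for $\ell_1+\ell_2<r\le D$.</li> </ul> For $2\le r\le D$ and $1\le j\le D$ define <ul> <li>$u_{rj}=v_{jr}-v_{j1}$ if $2\le r\le \ell_1$,</li> <li>$u_{rj}=v_{jr}+v_{j1}$ if $\ell_1+1\le r\le \ell_1+\ell_2$,</li> <li>$u_{rj}=v_{jr}$ if $\ell_1+\ell_2+1\le r\le D$.</li> </ul> Let $H$ be the $(D-1)\times D$ matrix $(u_{rj})_{2\le r\le D,\,1\le j\le D}$. For $1\le i\le D$, let $H_i$ be the $(D-1)\times(D-1)$ matrix obtained from $H$ by deleting its $i$-th column. Then $(\Lambda,\mathcal S,\delta)$ defines a folding if and only if $\gcd(\det H_1,\det H_2,\dots,\det H_D)=1$.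
   Context: Let $D\ge 1$. A shape is a finite nonempty set $\mathcal S\subset\mathbb Z^D$ containing the origin; the origin is its distinguished center point. A lattice is a set $\Lambda=\{\sum_{j=1}^D u_jv_j : u_1,\dots,u_D\in\mathbb Z\}$ for linearly independent $v_1,\dots,v_D\in\mathbb Z^D$. The $D\times D$ matrix $G$ whose rows are $v_1,\dots,v_D$ is a generator matrix of $\Lambda$. $\Lambda$ induces a lattice tiling of $\mathcal S$ if the translates $\mathcal S+\lambda$, $\lambda\in\Lambda$, are pairwise disjoint and cover $\mathbb Z^D$. The translate $\mathcal S+\lambda$ is called the copy of $\mathcal S$ with center $\lambda$. For $x\in\mathbb Z^D$, $c(x)$ denotes the unique $\lambda\in\Lambda$ with $x\in\mathcal S+\lambda$. A ternary vector (direction) is a nonzero $\delta\in\{-1,0,+1\}^D$. The folded-row of $(\Lambda,\mathcal S,\delta)$ is the sequence $p_0,p_1,p_2,\dots$ defined by $p_0=0$ and $p_{k+1}=(p_k+\delta)-c(p_k+\delta)$. Equivalently, $p_{k+1}=p_k+\delta$ if $p_k+\delta\in\mathcal S$; otherwise $p_{k+1}$ is $p_k+\delta$ minus the center of the copy of $\mathcal S$ containing $p_k+\delta$. The triple $(\Lambda,\mathcal S,\delta)$ defines a folding if every element of $\mathcal S$ occurs in its folded-row. *)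

(* Points of Z^D are row vectors 'rV[int]_D; indices are 0-based. *)
From HB Require Import structures.
From mathcomp Require Import all_boot all_order all_algebra.
Set Implicit Arguments. Unset Strict Implicit. Unset Printing Implicit Defensive.
Import Order.TTheory GRing.Theory Num.Theory.
Local Open Scope ring_scope.

(* A shape: a finite list of points (duplicates irrelevant) containing 0. *)
Definition is_shape (D : nat) (S : seq 'rV[int]_D) : Prop := (0 : 'rV[int]_D) \in S.

(* Lattice generated by the rows of G; rows linearly independent <-> det G != 0. *)
Definition gen_matrix (D : nat) (G : 'M[int]_D) : Prop := \det G != 0.

Definition in_lattice (D : nat) (G : 'M[int]_D) (x : 'rV[int]_D) : Prop :=
  exists u : 'rV[int]_D, x = u *m G.

Definition lattice_tiling (D : nat) (G : 'M[int]_D) (S : seq 'rV[int]_D) : Prop :=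
  (forall x : 'rV[int]_D, exists lam, in_lattice G lam /\ x - lam \in S) /\
  (forall x lam lam' : 'rV[int]_D, in_lattice G lam -> in_lattice G lam' ->
     x - lam \in S -> x - lam' \in S -> lam = lam').

(* p is the folded-row of (Lambda, S, delta): p_0 = 0 and
   p_{k+1} = (p_k + delta) - c(p_k + delta), i.e. p_{k+1} lies in S and differs
   from p_k + delta by a lattice vector (which is then c(p_k + delta)). *)
Definition folded_row (D : nat) (G : 'M[int]_D) (S : seq 'rV[int]_D)
  (delta : 'rV[int]_D) (p : nat -> 'rV[int]_D) : Prop :=
  p 0%N = 0 /\
  forall k : nat, p k.+1 \in S /\ in_lattice G (p k + delta - p k.+1).

Definition defines_folding (D : nat) (G : 'M[int]_D) (S : seq 'rV[int]_D)
  (delta : 'rV[int]_D) : Prop :=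
  exists p : nat -> 'rV[int]_D, folded_row G S delta p /\
    forall s, s \in S -> exists k : nat, p k = s.

Definition delta_vec (D l1 l2 : nat) : 'rV[int]_D :=
  \row_(r < D) (if (r < l1)%N then 1 else if (r < l1 + l2)%N then -1 else 0).

(* H = (u_{rj}), rows r = 2..D (0-based r = 1..D-1, i.e. lift ord0 i),
   columns j = 1..D; u_{rj} built from v_{jr} = G j r. Here D = n.+2. *)
Definition Hmat (n l1 l2 : nat) (G : 'M[int]_n.+2) : 'M[int]_(n.+1, n.+2) :=
  \matrix_(i < n.+1, j < n.+2)
    (let r := lift ord0 i in
     if (r < l1)%N then G j r - G j ord0
     else if (r < l1 + l2)%N then G j r + G j ord0
     else G j r).

Definition gcd_minors (n l1 l2 : nat) (G : 'M[int]_n.+2) : nat :=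
  \big[gcdn/0%N]_(i < n.+2) `|\det (col' i (Hmat l1 l2 G))|%N.

From HB Require Import structures.
From mathcomp Require Import all_boot all_order all_algebra.
From Stdlib Require Import ClassicalEpsilon.
Set Implicit Arguments. Unset Strict Implicit. Unset Printing Implicit Defensive.
Import Order.TTheory GRing.Theory Num.Theory.
Local Open Scope ring_scope.

(* The equivalence is factored through two intermediate conditions:
     folding  <->  Lambda + Z delta = Z^D  <->  H : Z^D -> Z^(D-1) is onto
              <->  the maximal minors of H have gcd 1.
   1. (Section MaximalMinors, any m x (m+1) integer matrix H.)  H is onto iff
      its signed maximal minors w_j have gcd 1.  Bordering H with a row c gives
      a square matrix of determinant c . w; if c . w = 1 (Bezout) it is
      unimodular and H is onto.  Conversely a right inverse X of H forces every
      kernel vector to be a multiple of w, and the trace of the kernel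
      projector 1 - X H, which is 1, is then an integer combination of the w_j.
   2. (Section FoldingLattice, any delta.)  The k-th point of a folded-row is
      congruent to k delta modulo Lambda, and every point of Z^D has a unique
      representative in S modulo Lambda.  Hence the folded-row meets all of S
      iff every point is congruent to a multiple of delta, i.e. iff
      Lambda + Z delta = Z^D; since (det G) delta lies in Lambda, the multiples
      0, ..., |det G| - 1 suffice.
   3. (Section DeltaQuotient.)  An explicit linear map Z^D -> Z^(D-1) with
      kernel Z delta sends u G to H u^T, which translates 2. into 1. *)

Lemma bezout_big (k : nat) (F : nat -> int) :
  exists c : nat -> int,
    \sum_(i < k) c i * F i = (\big[gcdn/0%N]_(i < k) `|F i|%N)%:Z.
Proof.
elim: k => [|k [c IH]]; first by exists (fun _ => 0); rewrite !big_ord0.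
have [u [v Huv]] := Bezoutz (\big[gcdn/0%N]_(i < k) `|F i|%N)%:Z (F k).
exists (fun i => if i == k then v else u * c i).
rewrite !big_ord_recr /= eqxx.
have -> : \sum_(i < k) (if (widen_ord (leqnSn k) i : nat) == k then v else u * c i) * F i
    = u * \sum_(i < k) c i * F i.
  rewrite mulr_sumr; apply: eq_bigr => i _ /=.
  by rewrite (ltn_eqF (ltn_ord i)) mulrA.
by rewrite IH Huv /gcdz absz_nat.
Qed.

Section MaximalMinors.
Variables (m : nat) (H : 'M[int]_(m, m.+1)).

(* The signed maximal minors of H: the cofactors of a row bordering H. *)
Definition signed_minor (j : 'I_m.+1) : int := (-1) ^+ j * \det (col' j H).

Definition top_bordered (c : 'rV[int]_m.+1) : 'M[int]_m.+1 :=
  \matrix_(i, j) match unlift ord0 i with None => c 0 j | Some i' => H i' j end.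

Definition left_bordered (X : 'M[int]_(m.+1, m)) (k : 'cV[int]_m.+1) :
    'M[int]_m.+1 :=
  \matrix_(r, j) match unlift ord0 j with None => k r 0 | Some j' => X r j' end.

(* Laplace expansion along the bordering row. *)
Lemma det_top_bordered c : \det (top_bordered c) = \sum_j c 0 j * signed_minor j.
Proof.
rewrite (expand_det_row _ ord0); apply: eq_bigr => j _.
rewrite /cofactor /signed_minor mxE unlift_none add0n; congr (_ * (_ * \det _)).
by apply/matrixP => i l; rewrite !mxE liftK.
Qed.

(* If H X = 1 and H k = 0, the product of the two bordered matrices is block
   upper triangular with diagonal blocks c k and 1. *)
Lemma det_bordered_mul X k c : H *m X = 1%:M -> H *m k = 0 ->
  \det (top_bordered c) * \det (left_bordered X k) = (c *m k) 0 0.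
Proof.
move=> HX Hk; rewrite -det_mulmx (expand_det_col _ ord0) big_ord_recl.
rewrite big1 ?addr0; last first.
  move=> i _; rewrite mxE.
  have -> : \sum_j top_bordered c (lift ord0 i) j * left_bordered X k j ord0
            = (H *m k) i 0.
    by rewrite mxE; apply: eq_bigr => j _; rewrite !mxE liftK unlift_none.
  by rewrite Hk mxE mul0r.
rewrite /cofactor expr0 mul1r.
have -> : row' ord0 (col' ord0 (top_bordered c *m left_bordered X k)) = 1%:M.
  rewrite -HX; apply/matrixP => i l; rewrite !mxE; apply: eq_bigr => j _.
  by rewrite !mxE !liftK.
rewrite det1 mulr1 !mxE; apply: eq_bigr => j _.
by rewrite !mxE unlift_none.
Qed.

Lemma kernel_multiple_of_minors X k : H *m X = 1%:M -> H *m k = 0 ->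
  forall i, k i 0 = signed_minor i * \det (left_bordered X k).
Proof.
move=> HX Hk i; have := det_bordered_mul (delta_mx 0 i) HX Hk.
rewrite det_top_bordered -rowE mxE => <-; congr (_ * _).
rewrite (bigD1 i) //= big1 ?addr0; first by rewrite mxE !eqxx mul1r.
by move=> r /negbTE ri; rewrite mxE ri mul0r.
Qed.

Definition surjective_mx : Prop :=
  forall y : 'cV[int]_m, exists v : 'cV[int]_m.+1, H *m v = y.

Lemma surjective_right_inverse :
  surjective_mx -> exists X : 'M[int]_(m.+1, m), H *m X = 1%:M.
Proof.
move=> onto; have /fin_all_exists [f Hf] : forall i : 'I_m,
  exists v : 'cV[int]_m.+1, H *m v = col i 1%:M by move=> i; apply: onto.
exists (\matrix_(r, i) f i r 0); apply/matrixP => i l.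
have := congr1 (fun A : 'M[int]_(m, 1) => A i 0) (Hf l).
by rewrite !mxE => <-; apply: eq_bigr => j _; rewrite !mxE.
Qed.

(* The trace of the projector 1 - X H onto ker H is 1; since each of its
   columns is a multiple of the minor vector, the minors are comaximal. *)
Lemma right_inverse_minors_comaximal X : H *m X = 1%:M ->
  exists z : 'I_m.+1 -> int, \sum_j signed_minor j * z j = 1.
Proof.
move=> HX; pose P : 'M[int]_m.+1 := 1%:M - X *m H.
have HP : H *m P = 0 by rewrite mulmxBr mulmx1 mulmxA HX mul1mx subrr.
exists (fun j => \det (left_bordered X (col j P))).
transitivity (\tr P); last first.
  by rewrite /P raddfB /= mxtrace_mulC HX !mxtrace1 -natrB // subSnn.
apply: eq_bigr => j _; rewrite -(kernel_multiple_of_minors HX) ?mxE //.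
by rewrite colE mulmxA HP mul0mx.
Qed.

(* The gcd divides every minor, hence divides the combination equal to 1. *)
Lemma surjective_gcd_minors :
  surjective_mx -> \big[gcdn/0%N]_(i < m.+1) `|\det (col' i H)|%N = 1%N.
Proof.
move=> /surjective_right_inverse [X /right_inverse_minors_comaximal [z Hz]].
set g := \big[gcdn/0%N]_(i < m.+1) _.
suff : (g%:Z %| \sum_j signed_minor j * z j)%Z.
  by rewrite Hz dvdzE absz_nat dvdn1 => /eqP.
apply: rpred_sum => j _; apply: dvdz_mulr.
by rewrite dvdzE absz_nat abszMsign; apply: (biggcdn_inf j).
Qed.

(* A Bezout row c for the minors makes top_bordered c unimodular, so the
   equation top_bordered c v = (0; y) is solvable over Z. *)
Lemma gcd_minors_surjective :
  \big[gcdn/0%N]_(i < m.+1) `|\det (col' i H)|%N = 1%N -> surjective_mx.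
Proof.
move=> g1 y; have [c Hc] := bezout_big m.+1 (fun j => signed_minor (inord j)).
pose M := top_bordered (\row_j c j).
have detM : \det M = 1.
  rewrite det_top_bordered.
  have -> : \sum_j (\row_j c j) 0 j * signed_minor j
            = \sum_(j < m.+1) c j * signed_minor (inord j).
    by apply: eq_bigr => j _; rewrite mxE inord_val.
  rewrite Hc -[RHS]/(Posz 1%N) -g1; congr Posz; apply: eq_bigr => j _.
  by rewrite inord_val abszMsign.
pose z : 'cV[int]_m.+1 :=
  \col_i match unlift ord0 i with None => 0 | Some i' => y i' 0 end.
exists (\adj M *m z); apply/matrixP => i l; rewrite ord1.
have : M *m (\adj M *m z) = z by rewrite mulmxA mul_mx_adj detM mul1mx.
move/(congr1 (fun A : 'cV[int]_m.+1 => A (lift ord0 i) 0)).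
rewrite [z _ _]mxE liftK => <-.
by rewrite !mxE; apply: eq_bigr => j _; rewrite !mxE liftK.
Qed.

Lemma surjective_iff_gcd_minors :
  surjective_mx <-> \big[gcdn/0%N]_(i < m.+1) `|\det (col' i H)|%N = 1%N.
Proof. by split; [exact: surjective_gcd_minors | exact: gcd_minors_surjective]. Qed.

End MaximalMinors.

Section FoldingLattice.
Variables (D : nat) (G : 'M[int]_D) (S : seq 'rV[int]_D) (delta : 'rV[int]_D).

Lemma in_lattice0 : in_lattice G 0.
Proof. by exists 0; rewrite mul0mx. Qed.

Lemma in_latticeD x y : in_lattice G x -> in_lattice G y -> in_lattice G (x + y).
Proof. by move=> [u ->] [v ->]; exists (u + v); rewrite mulmxDl. Qed.

Lemma in_latticeZ a x : in_lattice G x -> in_lattice G (a *: x).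
Proof. by move=> [u ->]; exists (a *: u); rewrite scalemxAl. Qed.

(* (det G) Z^D is contained in Lambda, by the adjugate identity. *)
Lemma det_scale_in_lattice x : in_lattice G (\det G *: x).
Proof. by exists (x *m \adj G); rewrite -mulmxA mul_adj_mx mul_mx_scalar. Qed.

Definition lattice_line_spans : Prop :=
  forall x : 'rV[int]_D, exists u (a : int), x = u *m G + a *: delta.

Lemma tiling_rep_unique s t : lattice_tiling G S ->
  s \in S -> t \in S -> in_lattice G (s - t) -> s = t.
Proof.
move=> [_ uniq] sS tS st; have := uniq s 0 (s - t) in_lattice0 st.
by rewrite subr0 subKr => /(_ sS tS) /esym/eqP; rewrite subr_eq0 => /eqP.
Qed.

Lemma folded_row_congr p : folded_row G S delta p ->
  forall k, in_lattice G (k%:Z *: delta - p k).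
Proof.
move=> [p0 Hp]; elim=> [|k IH]; first by rewrite p0 scale0r subr0; exact: in_lattice0.
have -> : k.+1%:Z *: delta - p k.+1 = (k%:Z *: delta - p k) + (p k + delta - p k.+1).
  by rewrite !addrA subrK intS scalerDl scale1r (addrC delta).
by apply: in_latticeD => //; case: (Hp k).
Qed.

Lemma folded_row_in_shape p : is_shape S -> folded_row G S delta p ->
  forall k, p k \in S.
Proof. by move=> sh [p0 Hp] [|k]; [rewrite p0 | case: (Hp k)]. Qed.

(* The folded-row exists: choose for each x its representative in S. *)
Lemma folded_row_exists : lattice_tiling G S -> exists p, folded_row G S delta p.
Proof.
move=> [cov _].
have rep : forall x, exists s, s \in S /\ in_lattice G (x - s).
  by move=> x; have [lam [Hl Hs]] := cov x; exists (x - lam); rewrite subKr.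
pose pick x := proj1_sig (constructive_indefinite_description _ (rep x)).
have pickP x : pick x \in S /\ in_lattice G (x - pick x).
  by rewrite /pick; case: constructive_indefinite_description.
by exists (fun k => iter k (fun q => pick (q + delta)) 0); split => // k; apply: pickP.
Qed.

(* A point x is congruent to some p k, hence to k delta, modulo Lambda. *)
Lemma folding_line_spans :
  lattice_tiling G S -> defines_folding G S delta -> lattice_line_spans.
Proof.
move=> tl [p [fr onto]] x; have [lam [[w ->] Hs]] := tl.1 x.
have [k pk] := onto _ Hs; have [v Hv] := folded_row_congr fr k.
exists (w - v), k%:Z.
by rewrite mulmxBl -Hv pk opprB addrA subrK addrC subrK.
Qed.

(* Every a delta is congruent to (a mod det G) delta, so each point of the
   shape is reached within the first |det G| steps of the folded-row. *)
Lemma line_spans_folding : gen_matrix G -> is_shape S -> lattice_tiling G S ->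
  lattice_line_spans -> defines_folding G S delta.
Proof.
move=> dG sh tl spans; have [p fr] := folded_row_exists tl.
exists p; split => // s sS; have [u [a Ha]] := spans s.
pose k := `|(a %% \det G)%Z|%N.
have ge0 : 0 <= (a %% \det G)%Z by apply: modz_ge0.
exists k; apply: esym; apply: tiling_rep_unique => //.
  exact: folded_row_in_shape.
have -> : s - p k = u *m G + (a %/ \det G)%Z *: (\det G *: delta)
                    + (k%:Z *: delta - p k).
  rewrite Ha {1}(divz_eq a (\det G)) gez0_abs // scalerA scalerDl !addrA.
  by rewrite (addrC _ ((a %% \det G)%Z *: delta)) !addrA -(addrA _ _ (- _)).
apply: in_latticeD; last exact: folded_row_congr.
by apply: in_latticeD; [exists u | apply: in_latticeZ; apply: det_scale_in_lattice].
Qed.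

Lemma folding_iff_line_spans : gen_matrix G -> is_shape S -> lattice_tiling G S ->
  defines_folding G S delta <-> lattice_line_spans.
Proof.
by move=> dG sh tl; split; [exact: folding_line_spans | exact: line_spans_folding].
Qed.

End FoldingLattice.

Section DeltaQuotient.
Variables (n : nat) (G : 'M[int]_n.+2) (l1 l2 : nat).
Hypothesis l1pos : (1 <= l1)%N.
Local Notation delta := (delta_vec n.+2 l1 l2).

(* The linear map Z^D -> Z^(D-1), x |-> (x_r - delta_r x_0)_(r >= 1): its
   kernel is Z delta and it carries the lattice onto the image of H. *)
Definition delta_quotient (x : 'rV[int]_n.+2) : 'cV[int]_n.+1 :=
  \col_i (if (lift ord0 i < l1)%N then x 0 (lift ord0 i) - x 0 ord0
          else if (lift ord0 i < l1 + l2)%N then x 0 (lift ord0 i) + x 0 ord0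
          else x 0 (lift ord0 i)).

Lemma delta_quotientD x y :
  delta_quotient (x + y) = delta_quotient x + delta_quotient y.
Proof.
apply/matrixP => i j; rewrite !mxE.
by case: ifP => _; [rewrite opprD addrACA | case: ifP => _ //; rewrite addrACA].
Qed.

Lemma delta_quotientZ a x : delta_quotient (a *: x) = a *: delta_quotient x.
Proof.
apply/matrixP => i j; rewrite !mxE.
by case: ifP => _; [rewrite mulrBr | case: ifP => _ //; rewrite mulrDr].
Qed.

(* On the lattice it acts as H (note u G = sum_j u_j v_j, v_j = row j of G). *)
Lemma delta_quotient_lattice u :
  delta_quotient (u *m G) = Hmat l1 l2 G *m u^T.
Proof.
apply/matrixP => i j; rewrite ord1 !mxE; under [in RHS]eq_bigr do rewrite !mxE.
rewrite /=; case: ifP => _.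
  by rewrite -sumrB; apply: eq_bigr => k _; rewrite mulrBl !(mulrC (u 0 k)).
case: ifP => _; last by apply: eq_bigr => k _; rewrite mulrC.
by rewrite -big_split; apply: eq_bigr => k _; rewrite mulrDl !(mulrC (u 0 k)).
Qed.

(* Its kernel is exactly Z delta; this needs delta_0 = 1, i.e. l1 >= 1. *)
Lemma delta_quotient_delta : delta_quotient delta = 0.
Proof.
apply/matrixP => i j; rewrite !mxE /= l1pos.
case: (lift ord0 i < l1)%N => /=; first by rewrite subrr.
by case: (lift ord0 i < l1 + l2)%N => /=; rewrite ?addNr.
Qed.

Lemma delta_quotient_kernel z : delta_quotient z = 0 -> z = z 0 ord0 *: delta.
Proof.
move=> Hz; apply/matrixP => a r; rewrite ord1 !mxE.
case: (unliftP ord0 r) => [i ->|->]; last by rewrite /= l1pos mulr1.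
have := congr1 (fun A : 'cV[int]_n.+1 => A i 0) Hz; rewrite !mxE.
case: ifP => _ /=; first by move/eqP; rewrite subr_eq0 => /eqP ->; rewrite mulr1.
case: ifP => _ /=; last by move=> ->; rewrite mulr0.
by move/eqP; rewrite addr_eq0 => /eqP ->; rewrite mulrN1.
Qed.

(* Lambda + Z delta = Z^D iff H is onto: surjectivity of the quotient map
   (lift y to (0, y)) transfers the spanning property through the kernel. *)
Lemma line_spans_iff_surjective :
  lattice_line_spans G delta <-> surjective_mx (Hmat l1 l2 G).
Proof.
split=> [spans y | onto x].
- pose x : 'rV[int]_n.+2 :=
    \row_r match unlift ord0 r with None => 0 | Some i => y i 0 end.
  have Qx : delta_quotient x = y.
    apply/matrixP => i j; rewrite ord1 !mxE liftK unlift_none.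
    by case: ifP => _; [|case: ifP => _]; rewrite ?subr0 ?addr0.
  have [u [a Ha]] := spans x; exists u^T.
  by rewrite -delta_quotient_lattice -Qx Ha delta_quotientD delta_quotientZ
    delta_quotient_delta scaler0 addr0.
- have [v Hv] := onto (delta_quotient x).
  exists v^T, ((x - v^T *m G) 0 ord0).
  have Qz : delta_quotient (x - v^T *m G) = 0.
    by rewrite -scaleN1r delta_quotientD delta_quotientZ delta_quotient_lattice
      trmxK Hv scaleN1r subrr.
  by rewrite -(delta_quotient_kernel Qz) addrC subrK.
Qed.

End DeltaQuotient.

Theorem mainTheorem5 (n : nat) (G : 'M[int]_n.+2) (S : seq 'rV[int]_n.+2)
  (l1 l2 : nat) :
  gen_matrix G -> is_shape S -> lattice_tiling G S ->
  (1 <= l1)%N -> (l1 + l2 <= n.+2)%N ->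
  defines_folding G S (delta_vec n.+2 l1 l2) <-> gcd_minors l1 l2 G = 1%N.
Proof.
move=> dG sh tl l1pos _.
rewrite folding_iff_line_spans // line_spans_iff_surjective //.
exact: surjective_iff_gcd_minors.
Qed.
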